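(* Let $S$ be a finite alphabet and let $h$ be a cellular automaton on $S^{\mathbb{Z}}$ which is an involution. Let $N\subset\mathbb{Z}$ be its minimal neighbourhood, so that $h(x)_k=\phi(x_{k+n_1},\dots,x_{k+n_t})$ with $N=\{n_1<\dots<n_t\}$ and $\phi$ depending essentially on each argument. Then $h$ is left-permutative if and only if $h$ is one-way to the right, i.e. if and only if $\min N\ge 0$.
   Context: A cellular automaton (CA) on $S^{\mathbb{Z}}$ is a continuous, shift-commuting map, given by a local rule $\phi$ on a finite neighbourhood. A CA is an involution if $h\circ h=\mathrm{id}$. The CA $h$ is left-permutative if, for every fixed values of the other arguments, the map $a\mapsto \phi(a,x_{n_2},\dots,x_{n_t})$ (variation of the argument at the leftmost neighbourhood position $n_1=\min N$) is a bijection of $S$. The CA $h$ is one-way to the right if its neighbourhood is contained in $\mathbb{N}_0=\{0,1,2,\dots\}$, i.e. $h(x)_k$ depends only on $x_j$ with $j\ge k$. *)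

From HB Require Import structures.
From mathcomp Require Import all_boot all_order all_algebra.
Set Implicit Arguments. Unset Strict Implicit. Unset Printing Implicit Defensive.
Import Order.TTheory GRing.Theory Num.Theory.
Local Open Scope ring_scope.

Definition config (S : finType) := int -> S.

Definition shift (S : finType) (x : config S) : config S := fun k => x (k + 1).

Definition upd (S : finType) (x : config S) (n : int) (a : S) : config S :=
  fun j => if j == n then a else x j.

(* h is a cellular automaton: shift-commuting, and h(x)_0 is determined by
   x on a finite window D (local rule on a finite neighbourhood; by
   Curtis-Hedlund-Lyndon this is equivalent to continuous + shift-commuting). *)
Definition is_CA (S : finType) (h : config S -> config S) : Prop :=
  (forall x, h (shift x) = shift (h x)) /\
  exists D : seq int, forall x y : config S,
      (forall d, d \in D -> x d = y d) -> h x 0 = h y 0.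

Definition involution (S : finType) (h : config S -> config S) : Prop :=
  forall x, h (h x) = x.

Definition in_min_nbhd (S : finType) (h : config S -> config S) (n : int) : Prop :=
  exists (x : config S) (a : S), h (upd x n a) 0 <> h x 0.

Definition left_permutative (S : finType) (h : config S -> config S) : Prop :=
  forall n1 : int, in_min_nbhd h n1 ->
    (forall n, in_min_nbhd h n -> n1 <= n) ->
    forall x : config S, bijective (fun a : S => h (upd x n1 a) 0).

Definition one_way_right (S : finType) (h : config S -> config S) : Prop :=
  forall n : int, in_min_nbhd h n -> 0 <= n.

(* Let n1 = min N.  N is finite and h x 0 depends on x only through N, so h x k
   only reads x on [k + n1, +oo).

   If n1 >= 0, changing x at n1 can change h x only at position 0, while
   x n1 = h (h x) n1 only reads h x on [2 n1, +oo), which lies in [0, +oo).  So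
   a |-> h (x[n1 := a]) 0 is injective, hence bijective on the finite alphabet.

   If n1 < 0, change x at 2 n1.  This leaves h x unchanged on (n1, +oo) and, by
   left-permutativity, changes it at n1; by left-permutativity again it changes
   h (h x) at 0, although h (h x) = x is unchanged there. *)

From HB Require Import structures.
From mathcomp Require Import all_boot all_order all_algebra.
From Stdlib Require Import Classical FunctionalExtensionality.
Set Implicit Arguments. Unset Strict Implicit. Unset Printing Implicit Defensive.
Import Order.TTheory GRing.Theory Num.Theory.
Local Open Scope ring_scope.

Definition translate (S : finType) (c : int) (x : config S) : config S :=
  fun j => x (j + c).

Lemma translate0 (S : finType) (x : config S) : translate 0 x = x.
Proof. by apply: functional_extensionality => j; rewrite /translate addr0. Qed.

Lemma translateD (S : finType) (c d : int) (x : config S) :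
  translate c (translate d x) = translate (c + d) x.
Proof. by apply: functional_extensionality => j; rewrite /translate addrA. Qed.

Lemma upd_id (S : finType) (x : config S) (n : int) : upd x n (x n) = x.
Proof.
by apply: functional_extensionality => j; rewrite /upd; case: eqP => [->|].
Qed.

Lemma exists_min_in_seq (P : int -> Prop) (s : seq int) :
  (exists n, P n /\ n \in s) ->
  exists m, P m /\ forall n, P n -> n \in s -> m <= n.
Proof.
elim: s => [[n [_]] //|d s IH] [n [Pn]].
rewrite in_cons => /orP nds.
have [/IH [m [Pm m_min]] | no_min] := classic (exists n, P n /\ n \in s).
  have [Pd|nPd] := classic (P d); last first.
    exists m; split=> // k Pk; rewrite in_cons => /orP [/eqP kd|/(m_min k Pk)//].
    by rewrite kd in Pk.
  have [md|dm] := leP m d.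
    by exists m; split=> // k Pk; rewrite in_cons => /orP [/eqP ->|/(m_min k Pk)].
  exists d; split=> // k Pk; rewrite in_cons => /orP [/eqP ->//|ks].
  exact: le_trans (ltW dm) (m_min k Pk ks).
have Pd : P d by case: nds => [/eqP <-//|ns]; case: no_min; exists n.
exists d; split=> // k Pk; rewrite in_cons => /orP [/eqP ->//|ks].
by case: no_min; exists k.
Qed.

Section MinimalNeighbourhood.

Variables (S : finType) (h : config S -> config S).
Hypothesis hCA : is_CA h.

Definition nbhd_lower_bound (n1 : int) := forall n, in_min_nbhd h n -> n1 <= n.

Lemma CA_translate_nat (n : nat) (x : config S) :
  h (translate n%:Z x) = translate n%:Z (h x).
Proof.
case: hCA => h_shift _.
have translateS (m : nat) (y : config S) :
    translate m.+1%:Z y = shift (translate m%:Z y).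
  by apply: functional_extensionality => j; rewrite /translate /shift intS addrA.
elim: n x => [|n IH] x; first by rewrite !translate0.
by rewrite !translateS h_shift IH.
Qed.

Lemma CA_translate (c : int) (x : config S) :
  h (translate c x) = translate c (h x).
Proof.
case: c => [n|n]; first exact: CA_translate_nat.
have back : translate n.+1%:Z (translate (- n.+1%:Z) x) = x.
  by rewrite translateD subrr translate0.
by rewrite NegzE -{2}back CA_translate_nat translateD addNr translate0.
Qed.

Lemma CA_coord (x : config S) (k : int) : h x k = h (translate k x) 0.
Proof. by rewrite CA_translate /translate add0r. Qed.

Lemma not_min_nbhd_upd (n : int) :
  ~ in_min_nbhd h n -> forall x a, h (upd x n a) 0 = h x 0.
Proof. by move=> nN x a; apply: NNPP => ne; apply: nN; exists x, a. Qed.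

Lemma min_nbhd_window : exists D : seq int, forall n, in_min_nbhd h n -> n \in D.
Proof.
case: hCA => _ [D hD]; exists D => n [x [a ne]].
apply: NNPP => nD; apply: ne; apply: hD => d dD; rewrite /upd.
by case: eqP => // dn; rewrite -dn dD in nD.
Qed.

Lemma CA_eq_on_min_nbhd (x y : config S) :
  (forall n, in_min_nbhd h n -> x n = y n) -> h x 0 = h y 0.
Proof.
case: hCA => _ [D hD] xyN.
suff agree_off (s : seq int) : forall z : config S,
    (forall n, in_min_nbhd h n -> z n = y n) ->
    (forall d, d \in D -> d \notin s -> z d = y d) -> h z 0 = h y 0.
  by apply: (agree_off D) => // d ->.
elim: s => [|d s IH] z zyN zyD; first by apply: hD => d dD; apply: zyD.
have <- : h (upd z d (y d)) 0 = h z 0.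
  have [dN|dN] := classic (in_min_nbhd h d); last exact: not_min_nbhd_upd.
  by rewrite -(zyN d dN) upd_id.
apply: IH => [n nN|e eD es]; rewrite /upd; case: eqP => [->//|en]; first exact: zyN.
by apply: zyD; rewrite // in_cons negb_or es andbT; apply/eqP.
Qed.

Lemma exists_min_nbhd (n : int) :
  in_min_nbhd h n -> exists n1, in_min_nbhd h n1 /\ nbhd_lower_bound n1.
Proof.
move=> nN; have [D inD] := min_nbhd_window.
have [|n1 [n1N n1_min]] := @exists_min_in_seq (in_min_nbhd h) D.
  by exists n; split; last exact: inD.
by exists n1; split=> // m mN; apply: n1_min (inD m mN).
Qed.

Lemma CA_eq_right_of (n1 : int) : nbhd_lower_bound n1 ->
  forall (x y : config S) (k : int),
  (forall j, k + n1 <= j -> x j = y j) -> h x k = h y k.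
Proof.
move=> n1_min x y k xy; rewrite !(CA_coord _ k).
apply: CA_eq_on_min_nbhd => n /n1_min n1n; apply: xy.
by rewrite addrC lerD2r.
Qed.

Lemma min_nbhd_nontrivial (n : int) :
  in_min_nbhd h n -> forall c : S, exists b, b <> c.
Proof.
case=> x [a ne] c.
have ax : a <> x n by move=> ax; apply: ne; rewrite ax upd_id.
have [ac|] := eqVneq a c; last by exists a; apply/eqP.
by exists (x n); rewrite -ac; apply/nesym.
Qed.

Lemma one_way_right_left_permutative :
  involution h -> one_way_right h -> left_permutative h.
Proof.
move=> hinv one_way n1 n1N n1_min x; apply: injF_bij => a b hab.
have n1_ge0 : 0 <= n1 by apply: one_way.
have eq_h_upd (k : int) : 0 <= k -> h (upd x n1 a) k = h (upd x n1 b) k.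
  rewrite le_eqVlt => /orP [/eqP <-//|k_gt0].
  apply: (CA_eq_right_of n1_min) => j kj; rewrite /upd gt_eqF //.
  by apply: lt_le_trans kj; rewrite ltrDr.
have hh_upd (c : S) : c = h (h (upd x n1 c)) n1 by rewrite hinv /upd eqxx.
rewrite (hh_upd a) (hh_upd b); apply: (CA_eq_right_of n1_min) => j jn.
by apply: eq_h_upd; apply: le_trans jn; rewrite addr_ge0.
Qed.

Lemma left_permutative_one_way_right :
  involution h -> left_permutative h -> one_way_right h.
Proof.
move=> hinv left_perm n nN; have [//|n_lt0] := leP 0 n; exfalso.
have [n1 [n1N n1_min]] := exists_min_nbhd nN.
have n1_lt0 : n1 < 0 := le_lt_trans (n1_min n nN) n_lt0.
have perm_inj (z : config S) := bij_inj (left_perm n1 n1N n1_min z).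
have [x _] := n1N.
have [b b_ne] := min_nbhd_nontrivial n1N (x (n1 + n1)).
pose y := upd x (n1 + n1) b.
have hy_right (k : int) : n1 < k -> h y k = h x k.
  move=> n1k; apply: (CA_eq_right_of n1_min) => j kj; rewrite /y /upd gt_eqF //.
  by apply: lt_le_trans kj; rewrite ltrD2r.
have hy_n1 : h y n1 <> h x n1.
  rewrite !(CA_coord _ n1) => hyx; apply: b_ne.
  have tr_y : translate n1 y = upd (translate n1 x) n1 b.
    apply: functional_extensionality => i.
    by rewrite /translate /y /upd (inj_eq (addIr n1)).
  rewrite tr_y -{2}[translate n1 x](upd_id _ n1) in hyx.
  exact: (perm_inj _ _ _ hyx).
(* both sides equal x 0, the left one because h (h y) = y and n1 + n1 <> 0 *)
apply/hy_n1/(perm_inj (h x)); rewrite /= upd_id hinv.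
transitivity (h (h y) 0).
  apply: esym; apply: (CA_eq_right_of n1_min) => j; rewrite add0r /upd => n1j.
  case: eqP => [->//|jn1]; apply: hy_right.
  by rewrite lt_def n1j andbT; apply/eqP.
rewrite hinv /y /upd gt_eqF // -[0 : int](addr0 0).
exact: ltrD.
Qed.

End MinimalNeighbourhood.

Theorem mainTheorem5 (S : finType) (h : config S -> config S)
  (hCA : is_CA h) (hinv : involution h) :
  left_permutative h <-> one_way_right h.
Proof.
split; [exact: left_permutative_one_way_right | exact: one_way_right_left_permutative].
Qed.
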